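(* Let $\zeta$ be the Riemann zeta function (meromorphically continued) and $\eta(s)=\sum_{n\ge1}(-1)^{n-1}n^{-s}$ the Dirichlet eta function. Define, for large real $x$, $g(x)=\bigl|\ln|\ln\eta(x)|\bigr|$ and $h(x)=\ln|\zeta(\eta(x))|$. Then for every integer $n\ge0$, $$\lim_{x\to\infty}\frac{g^{n}(x)}{x}=\lim_{x\to\infty}\frac{h^{n}(x)}{x}=(\ln2)^n,$$ where $g^{n},h^{n}$ denote $n$-th iterates. *)

From Stdlib Require Import Reals.
From Coquelicot Require Import Coquelicot.
Open Scope R_scope.

(* Dirichlet eta function on real arguments:
   eta(s) = sum_{n>=1} (-1)^(n-1) n^(-s)   (index k = n-1). *)
Definition eta (s : R) : R :=
  Series (fun k : nat => (-1) ^ k * Rpower (INR (k + 1)) (- s)).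

(* Riemann zeta on real arguments: the Dirichlet series for s > 1, and for
   s <= 1 (s <> 1) its analytic continuation, given on Re s > 0 by the
   classical formula zeta(s) = eta(s) / (1 - 2^(1-s)). *)
Definition zeta (s : R) : R :=
  if Rlt_dec 1 s then Series (fun k : nat => Rpower (INR (k + 1)) (- s))
  else eta s / (1 - Rpower 2 (1 - s)).

Definition g (x : R) : R := Rabs (ln (Rabs (ln (eta x)))).
Definition h (x : R) : R := ln (Rabs (zeta (eta x))).

From Stdlib Require Import Reals Lra Lia.
From Coquelicot Require Import Coquelicot.
Open Scope R_scope.

(* For large x the alternating series gives eta x = 1 - 2^-x + O(3^-x), so
   e := 1 - eta x satisfies ln e = - x ln 2 + O(1).  Then g x = - ln (- ln (1 - e))
   with - ln (1 - e) between e and 2e, and h x = ln eta (1 - e) - ln (2^e - 1)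
   with 2^e - 1 between e ln 2 and 2 e ln 2 (the pole of zeta at 1); hence both
   g and h are x ln 2 + O(1).  A map f x = c x + O(1) with c > 0 sends large
   arguments to large arguments, so its n-th iterate is c^n x + O(1), and
   dividing by x gives the limit c^n. *)

Definition asymptotically_linear (f : R -> R) (c : R) : Prop :=
  exists B X, forall x, X <= x -> Rabs (f x - c * x) <= B.

Lemma asymptotically_linear_iter f c n : 0 < c ->
  asymptotically_linear f c -> asymptotically_linear (Nat.iter n f) (c ^ n).
Proof.
  intros c_pos [C [x0 Hf]].
  induction n as [|n [B [X HB]]].
  - exists 0, 0. intros x _. simpl. rewrite Rmult_1_l, Rminus_diag, Rabs_R0. lra.
  - assert (Hcn : 0 < c ^ n) by (apply pow_lt, c_pos).
    exists (C + c * B), (Rmax X ((x0 + B) / c ^ n)). intros x Hx.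
    pose proof (Rmax_l X ((x0 + B) / c ^ n)) as HX.
    pose proof (Rmax_r X ((x0 + B) / c ^ n)) as Hx0.
    specialize (HB x ltac:(lra)). apply Rabs_le_between' in HB.
    set (y := Nat.iter n f x) in *.
    assert (Hy : x0 <= y).
    { apply (Rmult_le_compat_l (c ^ n)) in Hx0; [|lra].
      replace (c ^ n * ((x0 + B) / c ^ n)) with (x0 + B) in Hx0 by (field; lra).
      nra. }
    simpl. fold y.
    replace (f y - c * c ^ n * x) with ((f y - c * y) + c * (y - c ^ n * x)) by ring.
    eapply Rle_trans; [apply Rabs_triang|].
    rewrite Rabs_mult, (Rabs_pos_eq c) by lra.
    apply Rplus_le_compat; [exact (Hf y Hy)|].
    apply Rmult_le_compat_l; [lra|]. apply Rabs_le_between'. exact HB.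
Qed.

Lemma asymptotically_linear_is_lim f c :
  asymptotically_linear f c -> is_lim (fun x => f x / x) p_infty c.
Proof.
  intros [B [X Hf]].
  assert (Hc : forall b, is_lim (fun x => c + b * / x) p_infty c).
  { intro b. replace (Finite c) with (Finite (c + b * 0)) by (f_equal; ring).
    apply is_lim_plus'; [apply is_lim_const|].
    apply (is_lim_scal_l (fun x => / x) b p_infty 0).
    apply (is_lim_inv (fun x => x) p_infty p_infty); [apply is_lim_id | discriminate]. }
  apply (is_lim_le_le_loc (fun x => c + - B * / x) (fun x => c + B * / x)); [|apply Hc..].
  exists (Rmax X 1). intros x Hx.
  pose proof (Rmax_l X 1). pose proof (Rmax_r X 1).
  specialize (Hf x ltac:(lra)). apply Rabs_le_between in Hf.
  assert (0 < / x) by (apply Rinv_0_lt_compat; lra).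
  replace (f x / x) with (c + (f x - c * x) * / x) by (field; lra).
  split; apply Rplus_le_compat_l, Rmult_le_compat_r; lra.
Qed.

Lemma ln2_pos : 0 < ln 2.
Proof. pose proof ln_lt_2. lra. Qed.

Lemma ln2_lt_1 : ln 2 < 1.
Proof.
  rewrite <- (ln_exp 1). apply ln_increasing; [lra|].
  pose proof (exp_ineq1 1). lra.
Qed.

Lemma exp_le_compat a b : a <= b -> exp a <= exp b.
Proof. intros [Hlt|Heq]; [apply Rlt_le, exp_increasing, Hlt | rewrite Heq; apply Rle_refl]. Qed.

Lemma ln_le_between a k y : 0 < a -> a <= y <= k * a -> ln a <= ln y <= ln k + ln a.
Proof.
  intros Ha [Hay Hyk].
  assert (0 < k) by nra.
  rewrite <- ln_mult by lra. split; apply ln_le; lra.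
Qed.

Lemma inv_1_sub_le e : 0 <= e <= 1/2 -> / (1 - e) <= 1 + 2 * e.
Proof.
  intros. apply (Rmult_le_reg_r (1 - e)); [lra|]. rewrite Rinv_l by lra. nra.
Qed.

Lemma ln_le_sub_1 y : 0 < y -> ln y <= y - 1.
Proof. intros. pose proof (exp_ineq1_le (ln y)). rewrite exp_ln in *; lra. Qed.

Lemma opp_ln_1_sub_bounds e : 0 < e <= 1/2 -> e <= - ln (1 - e) <= 2 * e.
Proof.
  intros He. split.
  - pose proof (ln_le_sub_1 (1 - e)). lra.
  - rewrite <- ln_Rinv by lra.
    pose proof (ln_le_sub_1 (/ (1 - e)) ltac:(apply Rinv_0_lt_compat; lra)).
    pose proof (inv_1_sub_le e). lra.
Qed.

Lemma exp_sub_1_bounds t : 0 < t <= 1/2 -> t <= exp t - 1 <= 2 * t.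
Proof.
  intros Ht. pose proof (exp_ineq1_le t). split; [lra|].
  assert (exp t <= / (1 - t)).
  { pose proof (exp_ineq1_le (- t)) as Hm. rewrite exp_Ropp in Hm.
    rewrite <- (Rinv_inv (exp t)). apply Rinv_le_contravar; lra. }
  pose proof (inv_1_sub_le t). lra.
Qed.

Lemma is_lim_seq_Rpower_opp x : 0 < x ->
  is_lim_seq (fun k => Rpower (INR (k + 1)) (- x)) 0.
Proof.
  intros Hx.
  apply (filterlim_comp _ _ _ (fun k => INR (k + 1)) (fun y => Rpower y (- x))
           _ (Rbar_locally p_infty)).
  - eapply is_lim_seq_ext; [|apply -> (is_lim_seq_incr_1 INR); exact is_lim_seq_INR].
    intro k. rewrite Nat.add_1_r. reflexivity.
  - unfold Rpower.
    apply (is_lim_comp exp (fun y => - x * ln y) p_infty 0 m_infty);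
      [exact is_lim_exp_m | | now exists 0].
    replace m_infty with (Rbar_mult (- x) p_infty).
    + apply is_lim_scal_l, is_lim_ln_p.
    + simpl. destruct (Rle_dec 0 (- x)) as [H|H]; [|reflexivity].
      exfalso. apply (Rle_not_lt _ _ H). lra.
Qed.

Definition eta_term (x : R) (k : nat) : R := Rpower (INR (k + 1)) (- x).

Lemma eta_term_decreasing x : 0 < x -> Un_decreasing (eta_term x).
Proof.
  intros Hx k. unfold eta_term. rewrite !Rpower_Ropp.
  apply Rinv_le_contravar; [apply exp_pos|].
  apply Rle_Rpower_l; [lra|].
  split; [apply lt_0_INR | apply le_INR]; lia.
Qed.

Lemma eta_term_cv0 x : 0 < x -> Un_cv (eta_term x) 0.
Proof. intros. apply is_lim_seq_Reals, is_lim_seq_Rpower_opp. assumption. Qed.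

Lemma eta_bounds x : 0 < x ->
  1 - Rpower 2 (- x) <= eta x <= 1 - Rpower 2 (- x) + Rpower 3 (- x) /\ eta x <= 1.
Proof.
  intros Hx.
  destruct (alternated_series (eta_term x) (eta_term_decreasing x Hx) (eta_term_cv0 x Hx))
    as [l Hl].
  replace (eta x) with l.
  2:{ symmetry. apply is_series_unique, is_series_Reals, Hl. }
  pose proof (alternated_series_ineq _ l 0 (eta_term_decreasing x Hx) (eta_term_cv0 x Hx) Hl)
    as [A0 B0].
  pose proof (alternated_series_ineq _ l 1 (eta_term_decreasing x Hx) (eta_term_cv0 x Hx) Hl)
    as [_ B1].
  simpl in A0, B0, B1. unfold tg_alt, eta_term in A0, B0, B1. simpl in A0, B0, B1.
  replace (1 + 1) with 2 in * by lra. replace (2 + 1) with 3 in * by lra.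
  unfold Rpower in *. rewrite ln_1, Rmult_0_r, exp_0 in *.
  lra.
Qed.

Lemma Rpower_3_le_half_Rpower_2 x : 2 <= x -> Rpower 3 (- x) <= Rpower 2 (- x) / 2.
Proof.
  intros Hx. pose proof ln2_pos.
  assert (ln 2 / 2 <= ln 3 - ln 2).
  { assert (ln (2 * 2 * 2) < ln (3 * 3)) by (apply ln_increasing; lra).
    rewrite !ln_mult in * by lra. lra. }
  unfold Rpower, Rdiv. replace (/ 2) with (exp (- ln 2)) by (rewrite exp_Ropp, exp_ln; lra).
  rewrite <- exp_plus. apply exp_le_compat. nra.
Qed.

Lemma eta_defect_bounds x : 2 <= x ->
  0 < 1 - eta x <= / 4 /\ - ln 2 * x - ln 2 <= ln (1 - eta x) <= - ln 2 * x.
Proof.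
  intros Hx. pose proof ln2_pos.
  destruct (eta_bounds x ltac:(lra)) as [[Hlow Hup] _].
  pose proof (Rpower_3_le_half_Rpower_2 x Hx).
  assert (Hu : Rpower 2 (- x) <= / 4).
  { replace (/ 4) with (Rpower 2 (- INR 2)) by (rewrite Rpower_Ropp, Rpower_pow by lra; field).
    apply Rle_Rpower; simpl; lra. }
  assert (Hupos : 0 < Rpower 2 (- x)) by apply exp_pos.
  split; [lra|].
  destruct (ln_le_between (Rpower 2 (- x) / 2) 2 (1 - eta x)) as [L1 L2]; [lra|lra|].
  unfold Rdiv in L1, L2. rewrite ln_mult, ln_Rinv, ln_Rpower in L1, L2 by lra.
  lra.
Qed.

Lemma g_asymptotically_linear : asymptotically_linear g (ln 2).
Proof.
  exists (ln 2), 2. intros x Hx. pose proof ln2_pos.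
  destruct (eta_defect_bounds x Hx) as [He Hle].
  unfold g. set (e := 1 - eta x) in *. replace (eta x) with (1 - e) by (unfold e; ring).
  pose proof (opp_ln_1_sub_bounds e ltac:(lra)) as Hln.
  rewrite (Rabs_left (ln (1 - e))) by lra.
  destruct (ln_le_between e 2 (- ln (1 - e))) as [L1 L2]; [lra|lra|].
  assert (ln 2 * 2 <= ln 2 * x) by (apply Rmult_le_compat_l; lra).
  rewrite (Rabs_left (ln (- ln (1 - e)))) by lra.
  apply Rabs_le_between'. lra.
Qed.

Lemma ln_abs_zeta_1_sub e : 0 < e <= / 4 ->
  ln (1 - Rpower 2 (- (3 / 4))) - ln 2 - ln (ln 2) <= ln (Rabs (zeta (1 - e))) + ln e
  <= - ln (ln 2).
Proof.
  intros He. pose proof ln2_pos. pose proof ln2_lt_1.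
  unfold zeta. destruct (Rlt_dec 1 (1 - e)) as [Hc|_]; [lra|].
  replace (1 - (1 - e)) with e by ring.
  set (K := 1 - Rpower 2 (- (3 / 4))).
  assert (HK : 0 < K).
  { unfold K. rewrite <- (Rpower_O 2) at 1 by lra.
    pose proof (Rpower_lt 2 (- (3 / 4)) 0 ltac:(lra) ltac:(lra)). lra. }
  assert (Heta : K <= eta (1 - e) <= 1).
  { destruct (eta_bounds (1 - e) ltac:(lra)) as [[Hlow _] Hup]. split; [|exact Hup].
    pose proof (Rle_Rpower 2 (- (1 - e)) (- (3 / 4)) ltac:(lra) ltac:(lra)).
    unfold K. lra. }
  assert (Hpow : Rpower 2 e = exp (e * ln 2)) by reflexivity.
  rewrite Hpow. set (t := e * ln 2).
  assert (Ht : 0 < t <= 1 / 2) by (unfold t; nra).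
  pose proof (exp_sub_1_bounds t Ht) as Hexp.
  replace (eta (1 - e) / (1 - exp t)) with (- (eta (1 - e) / (exp t - 1))) by (field; lra).
  rewrite Rabs_Ropp, Rabs_pos_eq by (apply Rlt_le, Rdiv_lt_0_compat; lra).
  rewrite ln_div by lra.
  destruct (ln_le_between t 2 (exp t - 1)) as [L1 L2]; [lra|lra|].
  assert (Lt : ln t = ln e + ln (ln 2)) by (apply ln_mult; lra).
  assert (ln K <= ln (eta (1 - e)) <= 0) by (rewrite <- ln_1; split; apply ln_le; lra).
  lra.
Qed.

Lemma h_asymptotically_linear : asymptotically_linear h (ln 2).
Proof.
  set (C := ln (1 - Rpower 2 (- (3 / 4))) - ln 2 - ln (ln 2)).
  exists (Rabs C + Rabs (ln 2 - ln (ln 2))), 2. intros x Hx.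
  destruct (eta_defect_bounds x Hx) as [He Hle].
  unfold h. replace (eta x) with (1 - (1 - eta x)) by ring.
  pose proof (ln_abs_zeta_1_sub (1 - eta x) He).
  pose proof (Rle_abs (ln 2 - ln (ln 2))). pose proof (Rabs_pos (ln 2 - ln (ln 2))).
  pose proof (Rle_abs (- C)) as HC. rewrite Rabs_Ropp in HC. pose proof (Rabs_pos C).
  apply Rabs_le_between'. unfold C in *. lra.
Qed.

Theorem mainTheorem9 : forall n : nat,
  is_lim (fun x => Nat.iter n g x / x) p_infty (Finite (ln 2 ^ n)) /\
  is_lim (fun x => Nat.iter n h x / x) p_infty (Finite (ln 2 ^ n)).
Proof.
  intros n. split; apply asymptotically_linear_is_lim, asymptotically_linear_iter;
    auto using ln2_pos, g_asymptotically_linear, h_asymptotically_linear.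
Qed.
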